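(* Let $\phi=(\phi_g,A_g,A)_{g\in G}$ be a partial action of a group $G$ on a ring $A$ and let $A\rtimes_\phi G$ be the partial skew group ring. Then $A\rtimes_\phi G$ is graded von Neumann regular if and only if $A_g$ is von Neumann regular for every $g\in G$.
   Context: A partial action of a group $G$ (identity $\varepsilon$) on a ring $A$ consists of ideals $A_g\subseteq A$ and ring isomorphisms $\phi_g:A_{g^{-1}}\to A_g$ such that (i) $A_\varepsilon=A$, $\phi_\varepsilon=\operatorname{id}$; (ii) $\phi_g(A_{g^{-1}}\cap A_h)=A_g\cap A_{gh}$; (iii) $\phi_g(\phi_h(x))=\phi_{gh}(x)$ for $x\in A_{h^{-1}}\cap A_{h^{-1}g^{-1}}$. The partial skew group ring $A\rtimes_\phi G$ is the set of finite formal sums $\sum_g a_g\delta_g$ with $a_g\in A_g$, with multiplication extending $(a_g\delta_g)(b_h\delta_h)=\phi_g(\phi_{g^{-1}}(a_g)b_h)\delta_{gh}$; it is $G$-graded with $(A\rtimes_\phi G)_g=A_g\delta_g$. A (not necessarily unital) ring $B$ is von Neumann regular if for every $x\in B$ there is $y\in B$ with $xyx=x$; a $G$-graded ring is graded von Neumann regular if this holds for every homogeneous $x$. *)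

From HB Require Import structures.
From mathcomp Require Import all_boot all_order all_algebra.
Set Implicit Arguments. Unset Strict Implicit. Unset Printing Implicit Defensive.
Import GRing.Theory.
Local Open Scope ring_scope.

Record rng := Rng {
  rng_car :> zmodType;
  rmul : rng_car -> rng_car -> rng_car;
  rmulA : forall x y z, rmul x (rmul y z) = rmul (rmul x y) z;
  rmulDl : forall x y z, rmul (x + y) z = rmul x z + rmul y z;
  rmulDr : forall x y z, rmul x (y + z) = rmul x y + rmul x z
}.

Definition is_ideal (A : rng) (I : pred A) : Prop :=
  [/\ 0 \in I,
      (forall x y, x \in I -> y \in I -> x - y \in I),
      (forall a x, x \in I -> rmul a x \in I) &
      (forall a x, x \in I -> rmul x a \in I)].

(* Partial action (phi_g, A_g) of a group G on A:
   dom g = A_g, act g = phi_g : A_{g^-1} -> A_g (given as a total function,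
   only its restriction to A_{g^-1} matters). *)
Record is_partial_action (G : groupType) (A : rng)
    (dom : G -> pred A) (act : G -> A -> A) : Prop := {
  pa_ideal : forall g, is_ideal (dom g);
  pa_maps : forall g x, x \in dom (g^-1)%g -> act g x \in dom g;
  pa_add : forall g x y, x \in dom (g^-1)%g -> y \in dom (g^-1)%g ->
      act g (x + y) = act g x + act g y;
  pa_mul : forall g x y, x \in dom (g^-1)%g -> y \in dom (g^-1)%g ->
      act g (rmul x y) = rmul (act g x) (act g y);
  pa_inj : forall g x y, x \in dom (g^-1)%g -> y \in dom (g^-1)%g ->
      act g x = act g y -> x = y;
  pa_surj : forall g y, y \in dom g -> exists2 x, x \in dom (g^-1)%g & act g x = y;
  pa_dom1 : forall x, x \in dom 1%g;
  pa_act1 : forall x, act 1%g x = x;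
  (* (ii) phi_g(A_{g^-1} \cap A_h) = A_g \cap A_{gh} *)
  pa_ii : forall g h y, (y \in dom g /\ y \in dom (g * h)%g) <->
      exists2 x, (x \in dom (g^-1)%g /\ x \in dom h) & act g x = y;
  pa_iii : forall g h x, x \in dom (h^-1)%g -> x \in dom (h^-1 * g^-1)%g ->
      act g (act h x) = act (g * h)%g x
}.

Definition vnr_ideal (A : rng) (I : pred A) : Prop :=
  forall x, x \in I -> exists2 y, y \in I & rmul (rmul x y) x = x.

(* Elements of the partial skew group ring A ⋊_phi G: finite formal sums
   sum_i a_i delta_{g_i}, represented by lists of pairs (g_i, a_i) with
   a_i \in A_{g_i}; two lists represent the same element iff they have the
   same coefficient at every g. *)
Section Skew.
Variables (G : groupType) (A : rng) (dom : G -> pred A) (act : G -> A -> A).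

Definition skew_wf (s : seq (G * A)) : Prop := all (fun p => p.2 \in dom p.1) s.

Definition skew_coef (s : seq (G * A)) (h : G) : A :=
  \sum_(p <- s | p.1 == h) p.2.

Definition skew_eq (s t : seq (G * A)) : Prop :=
  forall h, skew_coef s h = skew_coef t h.

(* bilinear extension of (a delta_g)(b delta_h) = phi_g(phi_{g^-1}(a) b) delta_{gh} *)
Definition skew_mul (s t : seq (G * A)) : seq (G * A) :=
  [seq ((p.1 * q.1)%g, act p.1 (rmul (act (p.1^-1)%g p.2) q.2)) | p <- s, q <- t].

Definition skew_hom (g : G) (a : A) : seq (G * A) := [:: (g, a)].

Definition skew_graded_vnr : Prop :=
  forall g a, a \in dom g ->
    exists2 y, skew_wf y &
      skew_eq (skew_mul (skew_mul (skew_hom g a) y) (skew_hom g a)) (skew_hom g a).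
End Skew.

From mathcomp Require Import all_boot all_order all_algebra.
Set Implicit Arguments. Unset Strict Implicit. Unset Printing Implicit Defensive.
Import GRing.Theory.
Local Open Scope ring_scope.

(* The product (a d_g)(b d_(g^-1))(a d_g) of homogeneous elements is
   a phi_g(b) a d_g, which gives regularity of the skew ring from that of A_g
   (take b = phi_(g^-1)(c) for a c a = a).  Conversely, the d_g-coefficient of
   (a d_g) y (a d_g) only involves the d_(g^-1)-terms b_i of y and equals
   a (sum_i phi_g(b_i)) a, with sum_i phi_g(b_i) in A_g. *)

Section RngTheory.
Variable A : rng.

Lemma rmul0l (x : A) : rmul 0 x = 0.
Proof.
have E := rmulDl 0 0 x; rewrite addr0 in E.
by apply: (@addrI _ (rmul 0 x)); rewrite -E addr0.
Qed.

Lemma rmul0r (x : A) : rmul x 0 = 0.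
Proof.
have E := rmulDr x 0 0; rewrite addr0 in E.
by apply: (@addrI _ (rmul x 0)); rewrite -E addr0.
Qed.

Lemma rmul_suml I (r : seq I) (P : pred I) (F : I -> A) (x : A) :
  rmul (\sum_(i <- r | P i) F i) x = \sum_(i <- r | P i) rmul (F i) x.
Proof.
exact: (big_morph (fun y : A => rmul y x) (fun a b => rmulDl a b x) (rmul0l x)).
Qed.

Lemma rmul_sumr I (r : seq I) (P : pred I) (F : I -> A) (x : A) :
  rmul x (\sum_(i <- r | P i) F i) = \sum_(i <- r | P i) rmul x (F i).
Proof. exact: (big_morph (rmul x) (rmulDr x) (rmul0r x)). Qed.

Lemma idealD (I : pred A) : is_ideal I -> {in I &, forall x y, x + y \in I}.
Proof.
case=> I0 IB _ _ x y xI yI.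
by have := IB x (0 - y) xI (IB 0 y I0 yI); rewrite sub0r opprK.
Qed.

Lemma ideal_sum (I : pred A) (T : eqType) (r : seq T) (P : pred T) (F : T -> A) :
    is_ideal I -> (forall i, i \in r -> P i -> F i \in I) ->
  \sum_(i <- r | P i) F i \in I.
Proof.
move=> idI FI; rewrite big_seq_cond.
apply: (big_ind (fun a => a \in I)); first by case: idI.
  exact: idealD.
by move=> i /andP[ir Pi]; exact: FI.
Qed.

End RngTheory.

Section PartialAction.
Variables (G : groupType) (A : rng) (dom : G -> pred A) (act : G -> A -> A).
Hypothesis Hpa : is_partial_action dom act.

Lemma actV_dom g x : x \in dom g -> act g^-1 x \in dom g^-1.
Proof. by move=> xd; apply: (pa_maps Hpa); rewrite invgK. Qed.

Lemma actKV g x : x \in dom g -> act g (act g^-1 x) = x.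
Proof.
move=> xd; have := pa_iii Hpa (g := g) (h := g^-1) (x := x).
by rewrite invgK mulgV (pa_act1 Hpa); apply=> //; exact: (pa_dom1 Hpa).
Qed.

Lemma act_mulKV g a b : a \in dom g -> b \in dom g^-1 ->
  act g (rmul (act g^-1 a) b) = rmul a (act g b).
Proof. by move=> ad bd; rewrite (pa_mul Hpa) ?actKV ?actV_dom. Qed.

End PartialAction.

Lemma mulg_sandwich_eq (G : groupType) (g h : G) :
  (g * h * g == g)%g = (h == g^-1)%g.
Proof.
apply/eqP/eqP => [E | ->]; last by rewrite mulgV mul1g.
have gh1 : (g * h = 1)%g by apply: (mulIg g); rewrite mul1g.
by rewrite -[h](mulKg g) gh1 mulg1.
Qed.

Section SkewRing.
Variables (G : groupType) (A : rng) (dom : G -> pred A) (act : G -> A -> A).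

Local Notation skew_mul := (@skew_mul G A act).

Lemma skew_coef_cat (s t : seq (G * A)) (h : G) :
  skew_coef (s ++ t) h = skew_coef s h + skew_coef t h.
Proof. exact: big_cat. Qed.

Lemma skew_coef_hom (g h : G) (a : A) : skew_coef (skew_hom g a) h = if g == h then a else 0.
Proof. by rewrite /skew_coef big_cons big_nil addr0. Qed.

Lemma skew_mul_hom (g h : G) (a b : A) :
  skew_mul (skew_hom g a) (skew_hom h b) =
  skew_hom (g * h)%g (act g (rmul (act g^-1 a) b)).
Proof. by []. Qed.

Lemma skew_mul_catl (s1 s2 t : seq (G * A)) :
  skew_mul (s1 ++ s2) t = skew_mul s1 t ++ skew_mul s2 t.
Proof. exact: allpairs_cat. Qed.

Lemma skew_mul_hom_catr (g : G) (a : A) (t1 t2 : seq (G * A)) :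
  skew_mul (skew_hom g a) (t1 ++ t2) =
  skew_mul (skew_hom g a) t1 ++ skew_mul (skew_hom g a) t2.
Proof. by rewrite /skew_mul !allpairs1l map_cat. Qed.

Lemma skew_coef_mul_hom_seq (g : G) (a : A) (y z : seq (G * A)) (h : G) :
  skew_coef (skew_mul (skew_mul (skew_hom g a) y) z) h =
  \sum_(q <- y) skew_coef (skew_mul (skew_mul (skew_hom g a) [:: q]) z) h.
Proof.
elim: y => [|q y IHy]; first by rewrite /skew_coef /= !big_nil.
by rewrite -cat1s skew_mul_hom_catr skew_mul_catl skew_coef_cat big_cons IHy.
Qed.

Hypothesis Hpa : is_partial_action dom act.

Lemma skew_hom_sandwich g a b : a \in dom g -> b \in dom g^-1 ->
  skew_mul (skew_mul (skew_hom g a) (skew_hom g^-1 b)) (skew_hom g a) =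
  skew_hom g (rmul (rmul a (act g b)) a).
Proof.
move=> ad bd.
by rewrite !skew_mul_hom mulgV mul1g invg1 !(pa_act1 Hpa) (act_mulKV Hpa).
Qed.

Lemma skew_coef_sandwich g a y : a \in dom g -> skew_wf dom y ->
  skew_coef (skew_mul (skew_mul (skew_hom g a) y) (skew_hom g a)) g =
  rmul (rmul a (\sum_(q <- y | q.1 == (g^-1)%g) act g q.2)) a.
Proof.
move=> ad ywf; rewrite skew_coef_mul_hom_seq rmul_sumr rmul_suml.
rewrite [RHS]big_mkcond !big_seq; apply: eq_bigr => -[h b] qy /=.
have /= bd := allP ywf _ qy.
rewrite -[[:: (h, b)]]/(skew_hom h b).
case: (eqVneq h g^-1%g) => [hg | neq_h].
  by rewrite hg in bd *; rewrite skew_hom_sandwich // skew_coef_hom eqxx.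
by rewrite !skew_mul_hom skew_coef_hom mulg_sandwich_eq (negPf neq_h).
Qed.

Lemma vnr_ideal_of_skew_graded_vnr :
  skew_graded_vnr dom act -> forall g, vnr_ideal (dom g).
Proof.
move=> vnr g a ad; have [y ywf E] := vnr g a ad.
exists (\sum_(q <- y | q.1 == (g^-1)%g) act g q.2).
  apply: ideal_sum => [|q qy /eqP q1]; first exact: (pa_ideal Hpa).
  by apply: (pa_maps Hpa); rewrite -q1; exact: (allP ywf).
by have := E g; rewrite skew_coef_sandwich // skew_coef_hom eqxx.
Qed.

Lemma skew_graded_vnr_of_vnr_ideal :
  (forall g, vnr_ideal (dom g)) -> skew_graded_vnr dom act.
Proof.
move=> vnr g a ad; have [b bd Eb] := vnr g a ad.
exists (skew_hom g^-1 (act g^-1 b)); first by rewrite /skew_wf /= (actV_dom Hpa).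
by move=> h; rewrite skew_hom_sandwich ?(actKV Hpa) ?Eb ?(actV_dom Hpa).
Qed.

End SkewRing.

Theorem mainTheorem4 (G : groupType) (A : rng) (dom : G -> pred A)
    (act : G -> A -> A) (Hpa : is_partial_action dom act) :
  skew_graded_vnr dom act <-> (forall g : G, vnr_ideal (dom g)).
Proof.
split; [exact: vnr_ideal_of_skew_graded_vnr | exact: skew_graded_vnr_of_vnr_ideal].
Qed.
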